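(* For every $\Gamma \in \mathrm{WR}(\Lambda_h)$, $$\cos\theta(\Gamma) = \frac{p}{q} \le \frac12, \qquad \sin\theta(\Gamma) = \frac{r}{q}\sqrt3 \ge \frac{\sqrt3}{2},$$ for some relatively prime triple $(p,r,q) \in \mathbb{Z}^3_{\ge 0}$.
   Context: $\Lambda_h = \begin{bmatrix} 1 & -1/2 \\ 0 & \sqrt3/2\end{bmatrix}\mathbb{Z}^2$ is the hexagonal lattice. For a full-rank lattice $\Gamma\subset\mathbb{R}^2$, $|\Gamma| = \min\{\|y\|^2 : y\in\Gamma\setminus\{0\}\}$; $\Gamma$ is well-rounded (WR) if it has a basis of vectors $y$ with $\|y\|^2=|\Gamma|$ (a minimal basis); such a basis can be chosen with the angle between its vectors in $[\pi/3,\pi/2]$, and this angle, denoted $\theta(\Gamma)$, is an invariant of $\Gamma$. $\mathrm{WR}(\Lambda_h)$ is the set of full-rank WR sublattices of $\Lambda_h$. *)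

From Stdlib Require Import Reals ZArith.
Open Scope R_scope.

(* Points of the hexagonal lattice Lambda_h are encoded by their integer
   coordinates (a,b) w.r.t. the basis (1,0), (-1/2, sqrt3/2). *)
Definition hex (v : Z * Z) : R * R :=
  (IZR (fst v) - IZR (snd v) / 2, IZR (snd v) * sqrt 3 / 2).

Definition dot (x y : R * R) : R := fst x * fst y + snd x * snd y.
Definition sqnorm (x : R * R) : R := dot x x.
Definition det2 (x y : R * R) : R := fst x * snd y - snd x * fst y.

Definition zadd (u v : Z * Z) : Z * Z := (fst u + fst v, snd u + snd v)%Z.
Definition zopp (u : Z * Z) : Z * Z := (- fst u, - snd u)%Z.
Definition zlin (m n : Z) (u v : Z * Z) : Z * Z :=
  (m * fst u + n * fst v, m * snd u + n * snd v)%Z.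

Definition is_sublattice (G : Z * Z -> Prop) : Prop :=
  G (0, 0)%Z /\ (forall u v, G u -> G v -> G (zadd u v)) /\
  (forall u, G u -> G (zopp u)).

Definition full_rank (G : Z * Z -> Prop) : Prop :=
  exists u v, G u /\ G v /\ det2 (hex u) (hex v) <> 0.

Definition is_basis (G : Z * Z -> Prop) (u v : Z * Z) : Prop :=
  G u /\ G v /\ det2 (hex u) (hex v) <> 0 /\
  forall w, G w -> exists m n : Z, w = zlin m n u v.

Definition lattice_min (G : Z * Z -> Prop) (m : R) : Prop :=
  (exists w, G w /\ w <> (0, 0)%Z /\ sqnorm (hex w) = m) /\
  (forall w, G w -> w <> (0, 0)%Z -> m <= sqnorm (hex w)).

Definition minimal_basis (G : Z * Z -> Prop) (u v : Z * Z) : Prop :=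
  is_basis G u v /\
  lattice_min G (sqnorm (hex u)) /\ sqnorm (hex v) = sqnorm (hex u).

Definition WR_hex (G : Z * Z -> Prop) : Prop :=
  is_sublattice G /\ full_rank G /\ exists u v, minimal_basis G u v.

Definition angle (x y : R * R) : R :=
  acos (dot x y / (sqrt (sqnorm x) * sqrt (sqnorm y))).

From Stdlib Require Import Reals ZArith Lra Lia.
Open Scope R_scope.

(* In the coordinates of [hex], twice the dot product and [2/sqrt 3] times the
   determinant of two lattice vectors are integers.  For vectors of equal norm
   the cosine and sine of their angle are these numbers divided by [2 |u|^2]
   (an integer), up to the factor [sqrt 3] for the sine, thanks to Lagrange's
   identity [|u|^2 |v|^2 = (u.v)^2 + det(u,v)^2].  Reducing the three integers
   by their gcd gives the coprime triple; the bounds come from the monotonicity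
   of cos and sin on [[PI/3, PI/2]]. *)

Lemma sqnorm_ge0 (x : R * R) : 0 <= sqnorm x.
Proof. unfold sqnorm, dot; nra. Qed.

Lemma lagrange_identity (x y : R * R) :
  sqnorm x * sqnorm y = dot x y ^ 2 + det2 x y ^ 2.
Proof. unfold sqnorm, dot, det2; ring. Qed.

Lemma sqnorm_gt0_of_det2 (x y : R * R) :
  det2 x y <> 0 -> 0 < sqnorm x /\ 0 < sqnorm y.
Proof.
  intros Hdet.
  assert (Hprod : 0 < sqnorm x * sqnorm y).
  { rewrite lagrange_identity. pose proof (pow2_ge_0 (dot x y)).
    assert (0 < det2 x y ^ 2) by nra. lra. }
  pose proof (sqnorm_ge0 x); pose proof (sqnorm_ge0 y); split; nra.
Qed.

Section AngleOfVectors.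
Variables x y : R * R.
Hypotheses (Hx : 0 < sqnorm x) (Hy : 0 < sqnorm y).

Let m := sqrt (sqnorm x) * sqrt (sqnorm y).

Lemma norm_prod_gt0 : 0 < m.
Proof. apply Rmult_lt_0_compat; apply sqrt_lt_R0; assumption. Qed.

Lemma norm_prod_sqr : m ^ 2 = dot x y ^ 2 + det2 x y ^ 2.
Proof.
  rewrite <- lagrange_identity; unfold m.
  rewrite <- sqrt_mult by lra; simpl; rewrite Rmult_1_r.
  apply sqrt_sqrt; nra.
Qed.

Lemma cos_arg_bound : -1 <= dot x y / m <= 1.
Proof.
  pose proof norm_prod_gt0; pose proof norm_prod_sqr.
  pose proof (pow2_ge_0 (det2 x y)).
  assert (Hsq : (dot x y)² <= m²) by (unfold Rsqr; nra).
  pose proof (Rsqr_neg_pos_le_0 _ _ Hsq ltac:(lra)).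
  pose proof (Rsqr_incr_0_var _ _ Hsq ltac:(lra)).
  split; [apply Rmult_le_reg_r with m | apply Rmult_le_reg_r with m]; try lra;
    unfold Rdiv; rewrite Rmult_assoc, Rinv_l; lra.
Qed.

Lemma cos_angle : cos (angle x y) = dot x y / m.
Proof. apply cos_acos, cos_arg_bound. Qed.

Lemma sin_angle : sin (angle x y) = Rabs (det2 x y) / m.
Proof.
  pose proof norm_prod_gt0; pose proof norm_prod_sqr.
  unfold angle; fold m; rewrite sin_acos by apply cos_arg_bound.
  replace (1 - (dot x y / m)²) with ((det2 x y / m)²).
  - unfold Rdiv; rewrite sqrt_Rsqr_abs, Rabs_mult, Rabs_inv, (Rabs_pos_eq m) by lra.
    reflexivity.
  - unfold Rsqr; field_simplify_eq; [nra | lra].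
Qed.

End AngleOfVectors.

Definition zdot2 (u v : Z * Z) : Z :=
  (2 * fst u * fst v - fst u * snd v - snd u * fst v + 2 * snd u * snd v)%Z.

Definition zdet (u v : Z * Z) : Z := (fst u * snd v - snd u * fst v)%Z.

Lemma sqrt3_mul_sqrt3 : sqrt 3 * sqrt 3 = 3.
Proof. apply sqrt_sqrt; lra. Qed.

Lemma dot_hex (u v : Z * Z) : dot (hex u) (hex v) = IZR (zdot2 u v) / 2.
Proof.
  destruct u as [a b], v as [c d]; unfold dot, hex, zdot2; cbn [fst snd].
  rewrite !plus_IZR, !minus_IZR, !mult_IZR.
  replace (IZR b * sqrt 3 / 2 * (IZR d * sqrt 3 / 2))
    with (IZR b * IZR d * (sqrt 3 * sqrt 3) / 4) by field.
  rewrite sqrt3_mul_sqrt3; field.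
Qed.

Lemma det2_hex (u v : Z * Z) :
  det2 (hex u) (hex v) = sqrt 3 / 2 * IZR (zdet u v).
Proof.
  destruct u as [a b], v as [c d]; unfold det2, hex, zdet; cbn [fst snd].
  rewrite minus_IZR, !mult_IZR; field.
Qed.

Section AngleOfLatticeVectors.
Variables u v : Z * Z.
Hypotheses (Hdet : det2 (hex u) (hex v) <> 0)
           (Hnorm : sqnorm (hex v) = sqnorm (hex u)).

Lemma zdot2_diag_gt0 : (0 < zdot2 u u)%Z.
Proof.
  apply lt_IZR; destruct (sqnorm_gt0_of_det2 _ _ Hdet) as [Hu _].
  unfold sqnorm in Hu; rewrite dot_hex in Hu; lra.
Qed.

Lemma norm_prod_hex :
  sqrt (sqnorm (hex u)) * sqrt (sqnorm (hex v)) = IZR (zdot2 u u) / 2.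
Proof.
  destruct (sqnorm_gt0_of_det2 _ _ Hdet) as [Hu _].
  rewrite Hnorm, sqrt_sqrt by lra; unfold sqnorm; apply dot_hex.
Qed.

Lemma cos_angle_hex :
  cos (angle (hex u) (hex v)) = IZR (zdot2 u v) / IZR (zdot2 u u).
Proof.
  destruct (sqnorm_gt0_of_det2 _ _ Hdet) as [Hu Hv].
  pose proof (IZR_lt _ _ zdot2_diag_gt0).
  rewrite cos_angle, norm_prod_hex, dot_hex by assumption; field; lra.
Qed.

Lemma sin_angle_hex :
  sin (angle (hex u) (hex v)) = IZR (Z.abs (zdet u v)) / IZR (zdot2 u u) * sqrt 3.
Proof.
  destruct (sqnorm_gt0_of_det2 _ _ Hdet) as [Hu Hv].
  pose proof (IZR_lt _ _ zdot2_diag_gt0).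
  rewrite sin_angle, norm_prod_hex, det2_hex, abs_IZR by assumption.
  rewrite Rabs_mult, (Rabs_pos_eq (sqrt 3 / 2)).
  - field; lra.
  - pose proof (sqrt_pos 3); lra.
Qed.

End AngleOfLatticeVectors.

Lemma cos_sin_bounds_PI3_PI2 (t : R) : PI / 3 <= t <= PI / 2 ->
  0 <= cos t <= 1 / 2 /\ sqrt 3 / 2 <= sin t.
Proof.
  intros Ht; pose proof PI_RGT_0.
  split; [split|].
  - apply cos_ge_0; lra.
  - rewrite <- cos_PI3; apply cos_decr_1; lra.
  - rewrite <- sin_PI3; apply sin_incr_1; lra.
Qed.

Lemma IZR_ratio_mul_r (p q g : Z) : (g <> 0)%Z -> (q <> 0)%Z ->
  IZR (p * g) / IZR (q * g) = IZR p / IZR q.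
Proof.
  intros Hg%not_0_IZR Hq%not_0_IZR; rewrite !mult_IZR; field; auto.
Qed.

Lemma coprime_triple_same_ratios (P R Q : Z) :
  (0 <= P)%Z -> (0 <= R)%Z -> (0 < Q)%Z ->
  exists p r q : Z, (0 <= p)%Z /\ (0 <= r)%Z /\ (0 <= q)%Z /\
    Z.gcd (Z.gcd p r) q = 1%Z /\
    IZR P / IZR Q = IZR p / IZR q /\ IZR R / IZR Q = IZR r / IZR q.
Proof.
  intros HP HR HQ.
  set (g := Z.gcd (Z.gcd P R) Q).
  assert (Hq : (g | Q)%Z) by apply Z.gcd_divide_r.
  assert (Hp : (g | P)%Z)
    by (apply Z.divide_trans with (Z.gcd P R); apply Z.gcd_divide_l).
  assert (Hr : (g | R)%Z)
    by (apply Z.divide_trans with (Z.gcd P R); [apply Z.gcd_divide_l | apply Z.gcd_divide_r]).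
  destruct Hq as [q Hq], Hp as [p Hp], Hr as [r Hr].
  assert (Hg : (0 < g)%Z).
  { pose proof (Z.gcd_nonneg (Z.gcd P R) Q).
    destruct (Z.eq_dec g 0) as [E | ]; [rewrite E in Hq | ]; lia. }
  exists p, r, q; rewrite Hp, Hr, Hq, !IZR_ratio_mul_r by nia.
  repeat split; try nia.
  assert (Hgg : g = (Z.gcd (Z.gcd p r) q * g)%Z).
  { unfold g at 1; rewrite Hp, Hr, Hq, !Z.gcd_mul_mono_r_nonneg; lia. }
  nia.
Qed.

Theorem lemma3p1 :
  forall (G : Z * Z -> Prop), WR_hex G ->
  forall u v : Z * Z, minimal_basis G u v ->
  PI / 3 <= angle (hex u) (hex v) <= PI / 2 ->
  exists p r q : Z,
    (0 <= p)%Z /\ (0 <= r)%Z /\ (0 <= q)%Z /\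
    Z.gcd (Z.gcd p r) q = 1%Z /\
    cos (angle (hex u) (hex v)) = IZR p / IZR q /\
    IZR p / IZR q <= 1 / 2 /\
    sin (angle (hex u) (hex v)) = IZR r / IZR q * sqrt 3 /\
    IZR r / IZR q * sqrt 3 >= sqrt 3 / 2.
Proof.
  intros G _ u v [[_ [_ [Hdet _]]] [_ Hnorm]] Hang.
  destruct (cos_sin_bounds_PI3_PI2 _ Hang) as [[Hcos0 Hcos] Hsin].
  rewrite (cos_angle_hex u v Hdet Hnorm) in *; rewrite (sin_angle_hex u v Hdet Hnorm) in *.
  pose proof (zdot2_diag_gt0 u v Hdet) as Hn.
  assert (Hdot : (0 <= zdot2 u v)%Z).
  { apply le_IZR; pose proof (IZR_lt _ _ Hn).
    apply Rmult_le_reg_r with (/ IZR (zdot2 u u)); [apply Rinv_0_lt_compat |]; lra. }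
  destruct (coprime_triple_same_ratios _ _ _ Hdot (Z.abs_nonneg (zdet u v)) Hn)
    as (p & r & q & Hp & Hr & Hq & Hgcd & Ecos & Esin).
  exists p, r, q; rewrite <- Ecos, <- Esin; repeat split; auto; lra.
Qed.
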